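(* Let $n\ge3$, $\hat r\in\mathbb R^n$, $\delta\ge0$, $p\in[1,\infty]$, and let $q\in[1,\infty]$ be the dual exponent with $1/p+1/q=1$. Then for every $\pi\in\Delta_n$, $$\max_{\|\Delta\|_p\le\delta}\mathrm{Reg}(\pi,\hat r+\Delta)=\max_i\big\{\hat r_i-\langle\pi,\hat r\rangle+\delta\,b_{p,i}(\pi)\big\},\qquad b_{p,i}(\pi):=\|e_i-\pi\|_q.$$ Moreover, the following are equivalent: (a) for every $i$ there is a function $f_i$ with $b_{p,i}(\pi)=f_i(\pi_i)$ for all $\pi\in\Delta_n$; (b) $p\in\{1,\infty\}$. In these endpoint cases, $b_{1,i}(\pi)=1-\pi_i$ and $b_{\infty,i}(\pi)=2(1-\pi_i)$, and consequently $$\max_{\|\Delta\|_\infty\le\delta}\mathrm{Reg}(\pi,\hat r+\Delta)=2\delta+\max_i\{\hat r_i-2\delta\pi_i\}-\langle\pi,\hat r\rangle.$$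
   Context: $\Delta_n:=\{q\in\mathbb R^n_+:\sum_iq_i=1\}$; $e_i$ is the $i$-th standard basis vector. For $\pi\in\Delta_n$ and $s\in\mathbb R^n$, $\mathrm{Reg}(\pi,s):=\max_{\beta\in\Delta_n}\langle\beta-\pi,s\rangle$. *)

From HB Require Import structures.
From mathcomp Require Import all_boot all_order all_algebra.
From mathcomp Require Import all_classical all_reals.
From mathcomp Require Import ereal exp.
Set Implicit Arguments. Unset Strict Implicit. Unset Printing Implicit Defensive.
Import Order.TTheory GRing.Theory Num.Theory.
Local Open Scope classical_set_scope.
Local Open Scope ring_scope.

Section Defs.
Variable R : realType.
Variable n : nat.
Definition vec := 'I_n -> R.

Definition maxI (F : 'I_n -> R) : R := sup (range F).

Definition dot (x y : vec) : R := \sum_(i < n) x i * y i.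

Definition simplex (q : vec) : Prop := (forall i, 0 <= q i) /\ \sum_(i < n) q i = 1.

Definition basis (i : 'I_n) : vec := fun j => (i == j)%:R.

Definition vadd (x y : vec) : vec := fun j => x j + y j.
Definition vsub (x y : vec) : vec := fun j => x j - y j.

Definition Reg (pi s : vec) : R := sup [set dot (vsub beta pi) s | beta in simplex].

Definition pnorm (p : \bar R) (x : vec) : R :=
  match p with
  | EFin r => (\sum_(i < n) `|x i| `^ r) `^ r^-1
  | +oo%E => maxI (fun i => `|x i|)
  | -oo%E => 0
  end.

Definition dual (p : \bar R) : \bar R :=
  match p with
  | EFin r => if r == 1 then +oo%E else EFin (r / (r - 1))
  | +oo%E => 1%E
  | -oo%E => -oo%E
  end.

Definition bcoef (p : \bar R) (i : 'I_n) (pi : vec) : R := pnorm (dual p) (vsub (basis i) pi).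

Definition IsMaxOver (T : Type) (P : T -> Prop) (g : T -> R) (v : R) : Prop :=
  (exists x, P x /\ g x = v) /\ (forall x, P x -> g x <= v).
End Defs.

(* Over the simplex, [Reg pi s = max_i s_i - <pi, s>], since a linear function on the
   simplex peaks at a vertex.  Hence [Reg pi (rhat + D)] is the maximum over [i] of
   [rhat_i - <pi, rhat> + <e_i - pi, D>], and exchanging the two maxima leaves, for each
   [i], the maximum of [<e_i - pi, D>] over [|D|_p <= delta], which is
   [delta |e_i - pi|_q] by Hoelder's inequality and its equality case.  For [p = 1] and
   [p = +oo] the norms [|e_i - pi|_oo = 1 - pi_i] and [|e_i - pi|_1 = 2 (1 - pi_i)] only
   see [pi_i]; for [1 < p < +oo] the vertex [e_j] and the midpoint of [e_j] and [e_k]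
   both vanish at [i] but give [|e_i - pi|_q^q = 2] and [1 + 2^(1-q)] respectively. *)

From Pilot Require Import Defs.
From HB Require Import structures.
From mathcomp Require Import all_boot all_order all_algebra.
From mathcomp Require Import all_classical all_reals.
From mathcomp Require Import ereal exp.
From mathcomp Require Import ring lra.
Set Implicit Arguments. Unset Strict Implicit. Unset Printing Implicit Defensive.
Import Order.TTheory GRing.Theory Num.Theory.
Local Open Scope ring_scope.

Lemma sup_eq_max (R : realType) (E : set R) x :
  E x -> (forall y, E y -> y <= x) -> sup E = x.
Proof.
move=> Ex ub; apply/le_anti/andP; split.
  by apply: ge_sup; [exists x | move=> y /ub].
by apply: ub_le_sup => //; exists x => y /ub.
Qed.

Section FiniteMax.
Variables (R : realType) (n : nat).
Implicit Types F G : 'I_n -> R.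

Lemma maxI_eq F k : (forall i, F i <= F k) -> maxI F = F k.
Proof.
move=> Fk; apply: sup_eq_max; first by exists k.
by move=> _ [i _ <-].
Qed.

Lemma maxI_argmax F : (0 < n)%N -> exists k, maxI F = F k /\ forall i, F i <= F k.
Proof.
move=> n0; have [k _ Fk] := @arg_maxP _ R 'I_n (Ordinal n0) xpredT F isT.
have {}Fk i : F i <= F k by exact: Fk.
by exists k; rewrite (maxI_eq Fk).
Qed.

Lemma ler_maxI F i : (0 < n)%N -> F i <= maxI F.
Proof. by move=> /(maxI_argmax F) [k [-> Fk]]. Qed.

Lemma le_maxI F G : (0 < n)%N -> (forall i, F i <= G i) -> maxI F <= maxI G.
Proof.
move=> n0 FG; have [k [-> _]] := maxI_argmax F n0.
exact: le_trans (FG k) (ler_maxI _ _ n0).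
Qed.

Lemma maxID F c : (0 < n)%N -> maxI (fun i => F i + c) = maxI F + c.
Proof.
move=> n0; have [k [-> Fk]] := maxI_argmax F n0.
by apply: maxI_eq => i; rewrite lerD2r.
Qed.

End FiniteMax.

Section Simplex.
Variables (R : realType) (n : nat).
Implicit Types (x y s pi : vec R n) (k : 'I_n).

Lemma dot_basisl k s : dot (Defs.basis R k) s = s k.
Proof.
rewrite /dot (big_only1 k) // => [|j jk _]; first by rewrite /Defs.basis eqxx mul1r.
by rewrite /Defs.basis eq_sym (negbTE jk) mul0r.
Qed.

Lemma dot_vsubl x y s : dot (vsub x y) s = dot x s - dot y s.
Proof. by rewrite /dot -sumrB; apply: eq_bigr => i _; rewrite /vsub mulrBl. Qed.

Lemma dot_vaddr x y s : dot s (vadd x y) = dot s x + dot s y.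
Proof. by rewrite /dot -big_split; apply: eq_bigr => i _; rewrite /vadd mulrDr. Qed.

Lemma simplex_basis k : simplex (Defs.basis R k).
Proof.
split=> [i|]; first by rewrite /Defs.basis ler0n.
have := dot_basisl k (fun _ => 1); rewrite /dot => <-.
by apply: eq_bigr => i _; rewrite mulr1.
Qed.

Definition midpoint x y : vec R n := fun l => (x l + y l) / 2.

Lemma simplex_midpoint x y : simplex x -> simplex y -> simplex (midpoint x y).
Proof.
move=> [x_ge0 x1] [y_ge0 y1]; rewrite /midpoint; split=> [l|].
  by rewrite divr_ge0 ?addr_ge0.
rewrite -mulr_suml big_split /= x1 y1; lra.
Qed.

Lemma dot_simplex_le_maxI pi s : (0 < n)%N -> simplex pi -> dot pi s <= maxI s.
Proof.
move=> n0 [pi_ge0 pi_sum1].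
apply: (@le_trans _ _ (\sum_(i < n) pi i * maxI s)).
  by apply: ler_sum => i _; rewrite ler_wpM2l // ler_maxI.
by rewrite -mulr_suml pi_sum1 mul1r.
Qed.

Lemma RegE pi s : (0 < n)%N -> simplex pi -> Reg pi s = maxI s - dot pi s.
Proof.
move=> n0 spi; apply: sup_eq_max.
  have [k [-> _]] := maxI_argmax s n0.
  by exists (Defs.basis R k); [exact: simplex_basis | rewrite dot_vsubl dot_basisl].
by move=> _ [b sb <-]; rewrite dot_vsubl lerD2r dot_simplex_le_maxI.
Qed.

Lemma Reg_vadd pi rhat D : (0 < n)%N -> simplex pi ->
  Reg pi (vadd rhat D) =
  maxI (fun k => rhat k - dot pi rhat + dot (vsub (Defs.basis R k) pi) D).
Proof.
move=> n0 spi; rewrite RegE // -maxID //; congr maxI; apply: boolp.funext => k.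
by rewrite dot_vaddr dot_vsubl dot_basisl /vadd; lra.
Qed.

End Simplex.

Lemma powRV (R : realType) (x r : R) : 0 <= x -> x^-1 `^ r = (x `^ r)^-1.
Proof. by move=> x0; rewrite -powR_inv1 // -powRrM mulN1r powRN. Qed.

Lemma powR_fixpoint (R : realType) (a q : R) : 0 < a -> a != 1 -> a `^ q = a -> q = 1.
Proof.
move=> a_gt0 a_neq1 aq; have : a `^ (q - 1) == 1.
  rewrite powRB; last by rewrite (gt_eqF a_gt0) implybT.
  by rewrite aq powRr1 ?ltW // divff // gt_eqF.
by rewrite powR_eq1 (negbTE a_neq1) ltNge (ltW a_gt0) /= subr_eq0 => /eqP.
Qed.

Section Hoelder.
Variables (R : realType) (n : nat).
Implicit Types (x y D : vec R n).

Lemma dotC x y : dot x y = dot y x.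
Proof. by apply: eq_bigr => i _; rewrite mulrC. Qed.

Lemma pnorm_ge0 p x : (0 < n)%N -> 0 <= pnorm p x.
Proof.
move=> n0; case: p => [r| |] //=; first exact: powR_ge0.
exact: le_trans (normr_ge0 (x (Ordinal n0))) (ler_maxI (fun i => `|x i|) _ n0).
Qed.

Lemma pnorm1 x : pnorm 1%E x = \sum_(i < n) `|x i|.
Proof.
rewrite /= invr1 powRr1; last by apply: sumr_ge0 => i _; apply: powR_ge0.
by apply: eq_bigr => i _; rewrite powRr1.
Qed.

Lemma pnormZ (r c : R) x : r != 0 -> 0 <= c ->
  pnorm r%:E (fun i => c * x i) = c * pnorm r%:E x.
Proof.
move=> r0 c0 /=.
under eq_bigr => i _ do rewrite normrM (ger0_norm c0) powRM //.
rewrite -mulr_sumr powRM ?powR_ge0 //; last by apply: sumr_ge0 => i _; apply: powR_ge0.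
by rewrite -powRrM mulfV // powRr1.
Qed.

Lemma powR_pnorm (r : R) x : r != 0 ->
  pnorm r%:E x `^ r = \sum_(i < n) `|x i| `^ r.
Proof.
move=> r0; rewrite /= -powRrM mulVf // powRr1 //.
by apply: sumr_ge0 => i _; apply: powR_ge0.
Qed.

Lemma pnorm_eq0 (r : R) x : pnorm r%:E x = 0 -> forall i, x i = 0.
Proof.
move=> /powR_eq0_eq0 /eqP; rewrite psumr_eq0 => [/allP x0 i|i _]; last exact: powR_ge0.
by apply/normr0_eq0/(powR_eq0_eq0 (p := r))/eqP/x0; rewrite mem_index_enum.
Qed.

Lemma ler_dot_sum_norm x y : dot x y <= \sum_(i < n) `|x i| * `|y i|.
Proof. by apply: ler_sum => i _; rewrite -normrM ler_norm. Qed.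

Lemma ler_sum_norm_maxI x y : (0 < n)%N ->
  \sum_(i < n) `|x i| * `|y i| <= (\sum_(i < n) `|x i|) * maxI (fun i => `|y i|).
Proof.
move=> n0; rewrite mulr_suml; apply: ler_sum => i _.
by rewrite ler_wpM2l // (ler_maxI (fun i => `|y i|)).
Qed.

(* Young's inequality applied to [|x i| / |x|_r] and [|y i| / |y|_q], summed over [i]. *)
Lemma hoelder_sum (r q : R) x y : 0 < r -> 0 < q -> r^-1 + q^-1 = 1 ->
  \sum_(i < n) `|x i| * `|y i| <= pnorm r%:E x * pnorm q%:E y.
Proof.
move=> r_gt0 q_gt0 rq.
have [A0|A_neq0] := eqVneq (pnorm r%:E x) 0.
  rewrite A0 mul0r big1 // => i _.
  by rewrite (pnorm_eq0 A0) normr0 mul0r.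
have [B0|B_neq0] := eqVneq (pnorm q%:E y) 0.
  rewrite B0 mulr0 big1 // => i _.
  by rewrite (pnorm_eq0 B0) normr0 mulr0.
have Ar := powR_pnorm x (lt0r_neq0 r_gt0); have Bq := powR_pnorm y (lt0r_neq0 q_gt0).
set A := pnorm r%:E x in A_neq0 Ar *; set B := pnorm q%:E y in B_neq0 Bq *.
have A_gt0 : 0 < A by rewrite lt_def A_neq0 /A /= powR_ge0.
have B_gt0 : 0 < B by rewrite lt_def B_neq0 /B /= powR_ge0.
clearbody A B.
have young i : `|x i| * `|y i| / (A * B) <=
    `|x i| `^ r / A `^ r / r + `|y i| `^ q / B `^ q / q.
  have := conjugate_powR (divr_ge0 (normr_ge0 (x i)) (ltW A_gt0))
    (divr_ge0 (normr_ge0 (y i)) (ltW B_gt0)) r_gt0 q_gt0 rq.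
  have iA : 0 <= A^-1 by rewrite invr_ge0 ltW.
  have iB : 0 <= B^-1 by rewrite invr_ge0 ltW.
  rewrite (powRM r (normr_ge0 (x i)) iA) (powRM q (normr_ge0 (y i)) iB).
  by rewrite (powRV r (ltW A_gt0)) (powRV q (ltW B_gt0)) invfM mulrACA.
rewrite -[A * B]mul1r -ler_pdivrMr ?mulr_gt0 // mulr_suml.
apply: le_trans (ler_sum _ (fun i _ => young i)) _.
rewrite big_split /= -!mulr_suml -Ar -Bq !divff ?gt_eqF ?powR_gt0 //.
by rewrite !mul1r rq.
Qed.

End Hoelder.

Section ConjugateExponent.
Variables (R : realType) (n : nat) (r : R).
Hypothesis r_gt1 : 1 < r.
Implicit Types y D : vec R n.
Let q := r / (r - 1).
Let r_gt0 : 0 < r. Proof. exact: lt_trans ltr01 r_gt1. Qed.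
Let r_sub1_neq0 : r - 1 != 0. Proof. by rewrite subr_eq0 gt_eqF. Qed.

Lemma conjexp_gt1 : 1 < q.
Proof. by rewrite /q ltr_pdivlMr ?subr_gt0 //; lra. Qed.

Lemma conjexp_invD : r^-1 + q^-1 = 1.
Proof. by rewrite /q; field; rewrite r_sub1_neq0 lt0r_neq0. Qed.

Lemma conjexp_subr1M : (q - 1) * r = q.
Proof. by rewrite /q; field. Qed.

Let q_gt0 : 0 < q. Proof. exact: lt_trans ltr01 conjexp_gt1. Qed.

Lemma dual_EFin : dual r%:E = q%:E.
Proof. by rewrite /= gt_eqF. Qed.

(* The equality case of Hoelder's inequality: [D_j] proportional to [sgn(y_j) |y_j|^(q-1)]. *)
Let w (y : vec R n) : vec R n := fun j => y j * `|y j| `^ (q - 2).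

Lemma norm_witness y j : `|w y j| = `|y j| `^ (q - 1).
Proof.
rewrite /w normrM (ger0_norm (powR_ge0 _ _)) (_ : q - 2 = q - 1 - 1); last lra.
by rewrite mulr_powRB1 // subr_gt0 conjexp_gt1.
Qed.

Lemma pnorm_witness y : pnorm r%:E (w y) = pnorm q%:E y `^ (q - 1).
Proof.
rewrite /= -powRrM.
under eq_bigr => j _ do rewrite norm_witness -powRrM conjexp_subr1M.
congr (_ `^ _); have := conjexp_invD.
rewrite mulrBr mulr1 mulVf ?gt_eqF //; lra.
Qed.

Lemma dot_witness y : dot y (w y) = pnorm q%:E y `^ q.
Proof.
rewrite powR_pnorm ?gt_eqF //; apply: eq_bigr => j _.
rewrite /w mulrA (_ : y j * y j = `|y j| * `|y j|); last first.
  by rewrite -normrM ger0_norm // -expr2 sqr_ge0.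
rewrite -mulrA (_ : q - 2 = q - 1 - 1); last lra.
by rewrite mulr_powRB1 ?subr_gt0 ?conjexp_gt1 // mulr_powRB1.
Qed.

Lemma hoelder_attained_conj y delta : 0 <= delta ->
  exists D, pnorm r%:E D <= delta /\ dot y D = delta * pnorm q%:E y.
Proof.
move=> delta_ge0; set B := pnorm q%:E y; set X := B `^ (q - 1).
have c_ge0 : 0 <= delta / X by rewrite divr_ge0 ?powR_ge0.
exists (fun j => delta / X * w y j); split.
  rewrite pnormZ ?gt_eqF // pnorm_witness -/B -/X.
  have [->|X_neq0] := eqVneq X 0; first by rewrite mulr0.
  by rewrite divfK.
rewrite /dot; under eq_bigr => j _ do rewrite mulrCA.
rewrite -mulr_sumr -/(dot y (w y)) dot_witness -/B.
have B_ge0 : 0 <= B by exact: powR_ge0.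
rewrite -mulr_powRB1 // -/X.
have [X0|X_neq0] := eqVneq X 0; last by rewrite mulrCA divfK // mulrC.
by rewrite (powR_eq0_eq0 X0) !(mulr0, mul0r).
Qed.

End ConjugateExponent.

Lemma normr_mulr_sg (R : realType) (c a : R) : 0 <= c -> `|c * Num.sg a| <= c.
Proof.
move=> c_ge0; rewrite normrM ger0_norm // normr_sg ler_piMr //.
by case: (a != 0).
Qed.

Section HoelderExtended.
Variables (R : realType) (n : nat).
Hypothesis n_gt0 : (0 < n)%N.
Implicit Types (y D : vec R n) (p : \bar R).

Lemma hoelder_dot p y D : (1 <= p)%E -> dot y D <= pnorm p D * pnorm (dual p) y.
Proof.
case: p => [r r_ge1| _|//].
- rewrite dotC; apply: le_trans (ler_dot_sum_norm _ _) _.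
  have [->|r_neq1] := eqVneq r 1.
    by rewrite pnorm1 /dual eqxx; exact: ler_sum_norm_maxI.
  have r_gt1 : 1 < r by rewrite lt_def r_neq1 -lee_fin.
  rewrite dual_EFin //; apply: hoelder_sum (conjexp_invD r_gt1).
    exact: lt_trans ltr01 r_gt1.
  exact: lt_trans ltr01 (conjexp_gt1 r_gt1).
- rewrite [dual _]/= pnorm1 mulrC; apply: le_trans (ler_dot_sum_norm _ _) _.
  exact: ler_sum_norm_maxI.
Qed.

Lemma hoelder_attained p y delta : (1 <= p)%E -> 0 <= delta ->
  exists D, pnorm p D <= delta /\ dot y D = delta * pnorm (dual p) y.
Proof.
move=> + delta_ge0; case: p => [r r_ge1| _|//].
- have [->|r_neq1] := eqVneq r 1; last first.
    have r_gt1 : 1 < r by rewrite lt_def r_neq1 -lee_fin.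
    by rewrite dual_EFin //; exact: hoelder_attained_conj.
  have [k [ymax _]] := maxI_argmax (fun i => `|y i|) n_gt0.
  exists (fun j => delta * Num.sg (y k) * Defs.basis R k j); split.
    rewrite pnorm1 (big_only1 k) // => [|j jk _].
      by rewrite /Defs.basis eqxx mulr1 normr_mulr_sg.
    by rewrite /Defs.basis eq_sym (negbTE jk) mulr0 normr0.
  rewrite /dual eqxx /= ymax /dot (big_only1 k) // => [|j jk _].
    by rewrite /Defs.basis eqxx mulr1 mulrC -mulrA -normrEsg.
  by rewrite /Defs.basis eq_sym (negbTE jk) !mulr0.
- exists (fun j => delta * Num.sg (y j)); split.
    rewrite /=; have [k [-> _]] := maxI_argmax (fun j => `|delta * Num.sg (y j)|) n_gt0.
    exact: normr_mulr_sg.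
  rewrite [dual _]/= pnorm1 /dot mulr_sumr; apply: eq_bigr => j _.
  by rewrite mulrC -mulrA -normrEsg.
Qed.

End HoelderExtended.

Lemma robust_regret (R : realType) (n : nat) (rhat : vec R n) delta p pi :
  (0 < n)%N -> 0 <= delta -> (1 <= p)%E -> simplex pi ->
  IsMaxOver (fun D : vec R n => pnorm p D <= delta) (fun D => Reg pi (vadd rhat D))
    (maxI (fun i => rhat i - dot pi rhat + delta * bcoef p i pi)).
Proof.
move=> n_gt0 delta_ge0 p_ge1 spi.
set F := fun i => rhat i - dot pi rhat + delta * bcoef p i pi.
have ub D : pnorm p D <= delta -> Reg pi (vadd rhat D) <= maxI F.
  move=> D_le; rewrite Reg_vadd //; apply: le_maxI => // k; rewrite lerD2l /bcoef.
  apply: le_trans (hoelder_dot n_gt0 _ _ p_ge1) _.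
  by rewrite ler_wpM2r ?pnorm_ge0.
split=> //; have [k [Fk _]] := maxI_argmax F n_gt0.
have [D [D_le dotD]] :=
  hoelder_attained n_gt0 (vsub (Defs.basis R k) pi) p_ge1 delta_ge0.
exists D; split=> //; apply/le_anti/andP; split; first exact: ub.
rewrite Reg_vadd // Fk /F /bcoef -dotD.
exact: (ler_maxI (fun k => _ + dot (vsub (Defs.basis R k) pi) D)).
Qed.

Section Endpoints.
Variables (R : realType) (n : nat) (pi : vec R n) (i : 'I_n).
Hypothesis spi : simplex pi.
Let pi_ge0 j : 0 <= pi j. Proof. by case: spi. Qed.

Lemma simplex_sum_neq : \sum_(j < n | j != i) pi j = 1 - pi i.
Proof. by case: spi => _ pi1; rewrite -pi1 [in RHS](bigD1 i) //=; lra. Qed.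

Lemma simplex_sub1_ge0 : 0 <= 1 - pi i.
Proof. by rewrite -simplex_sum_neq sumr_ge0. Qed.

Lemma simplex_le_sub1 j : j != i -> pi j <= 1 - pi i.
Proof.
by move=> ji; rewrite -simplex_sum_neq (bigD1 j) //= lerDl sumr_ge0.
Qed.

Lemma norm_basis_sub j :
  `|Defs.basis R i j - pi j| = if j == i then 1 - pi i else pi j.
Proof.
rewrite /Defs.basis eq_sym; case: eqP => [->|_].
  by rewrite ger0_norm ?simplex_sub1_ge0.
by rewrite sub0r normrN ger0_norm.
Qed.

Lemma bcoef1 : bcoef 1%E i pi = 1 - pi i.
Proof.
rewrite /bcoef /dual eqxx /= (maxI_eq (k := i)) /vsub norm_basis_sub ?eqxx // => j.
rewrite norm_basis_sub; case: eqP => [_|/eqP]; first exact: lexx.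
exact: simplex_le_sub1.
Qed.

Lemma bcoefy : bcoef +oo%E i pi = 2 * (1 - pi i).
Proof.
rewrite /bcoef [dual _]/= pnorm1 (bigD1 i) //= /vsub norm_basis_sub eqxx.
under eq_bigr => j ji do rewrite norm_basis_sub (negbTE ji).
by rewrite simplex_sum_neq; lra.
Qed.

End Endpoints.

Section PowerSums.
Variables (R : realType) (n : nat) (q : R).
Hypothesis q_gt0 : 0 < q.

Lemma sum_powR_basis_sub (pi : vec R n) i : pi i = 0 -> (forall j, 0 <= pi j) ->
  \sum_j `|Defs.basis R i j - pi j| `^ q = 1 + \sum_j pi j `^ q.
Proof.
move=> pi_i0 pi_ge0; rewrite (bigD1 i) //= [in RHS](bigD1 i) //= pi_i0.
rewrite powR0 ?gt_eqF // add0r /Defs.basis eqxx subr0 normr1 powR1; congr (_ + _).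
by apply: eq_bigr => j ji; rewrite eq_sym (negbTE ji) sub0r normrN ger0_norm.
Qed.

Lemma sum_powR_basis (j : 'I_n) : \sum_l Defs.basis R j l `^ q = 1.
Proof.
rewrite (big_only1 j) // => [|l lj _]; first by rewrite /Defs.basis eqxx powR1.
by rewrite /Defs.basis eq_sym (negbTE lj) powR0 ?gt_eqF.
Qed.

Lemma sum_powR_midpoint (j k : 'I_n) : j != k ->
  \sum_l midpoint (Defs.basis R j) (Defs.basis R k) l `^ q = 2 * 2^-1 `^ q.
Proof.
move=> jk; rewrite (bigD1 j) //= (bigD1 k) 1?eq_sym //= big1 => [|l /andP [lj lk]].
  rewrite /midpoint /Defs.basis !eqxx [k == j]eq_sym (negbTE jk) addr0 add0r mul1r.
  lra.
by rewrite /midpoint /Defs.basis eq_sym (negbTE lj) eq_sym (negbTE lk) addr0 mul0r powR0 ?gt_eqF.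
Qed.

End PowerSums.

Lemma bcoef_zero_coord (R : realType) (n : nat) (r : R) i (pi : vec R n) :
  1 < r -> simplex pi -> pi i = 0 ->
  bcoef r%:E i pi = (1 + \sum_l pi l `^ (r / (r - 1))) `^ (r / (r - 1))^-1.
Proof.
move=> r_gt1 [pi_ge0 _] pi_i0.
have q_gt0 : 0 < r / (r - 1) := lt_trans ltr01 (conjexp_gt1 r_gt1).
by rewrite /bcoef dual_EFin //= /vsub (sum_powR_basis_sub q_gt0 pi_i0 pi_ge0).
Qed.

Lemma bcoef_not_local (R : realType) (n : nat) (r : R) (i j k : 'I_n) :
  1 < r -> i != j -> i != k -> j != k ->
  ~ exists f : R -> R, forall pi, simplex pi -> bcoef r%:E i pi = f (pi i).
Proof.
move=> r_gt1 ij ik jk [f bf].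
have sej := simplex_basis R j.
have smid := simplex_midpoint sej (simplex_basis R k).
have ej_i0 : Defs.basis R j i = 0 by rewrite /Defs.basis eq_sym (negbTE ij).
have mid_i0 : midpoint (Defs.basis R j) (Defs.basis R k) i = 0.
  by rewrite /midpoint /Defs.basis eq_sym (negbTE ij) eq_sym (negbTE ik) addr0 mul0r.
have E : bcoef r%:E i (Defs.basis R j) =
         bcoef r%:E i (midpoint (Defs.basis R j) (Defs.basis R k)).
  by rewrite (bf _ sej) (bf _ smid) ej_i0 mid_i0.
have q_gt1 : 1 < r / (r - 1) := conjexp_gt1 r_gt1.
have q_gt0 := lt_trans ltr01 q_gt1.
rewrite (bcoef_zero_coord r_gt1 sej ej_i0) (bcoef_zero_coord r_gt1 smid mid_i0) in E.
rewrite (sum_powR_basis q_gt0) (sum_powR_midpoint q_gt0 jk) in E.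
set q := r / (r - 1) in q_gt1 q_gt0 E.
have {}E : 1 + 1 = 1 + 2 * 2^-1 `^ q.
  by apply: (powR_injective _ _ _ E); rewrite ?invr_gt0 ?nnegrE //; lra.
have half_gt0 : (0 : R) < 2^-1 by lra.
have half_neq1 : (2^-1 : R) != 1 by rewrite lt_eqF //; lra.
have /(powR_fixpoint half_gt0 half_neq1) q1 : (2^-1 : R) `^ q = 2^-1 by lra.
by move: q_gt1; rewrite q1 ltxx.
Qed.

Theorem mainTheorem10 (R : realType) (n : nat) (hn : (3 <= n)%N)
    (rhat : vec R n) (delta : R) (hdelta : 0 <= delta)
    (p : \bar R) (hp : (1 <= p)%E) :
  [/\ (forall pi : vec R n, simplex pi ->
         IsMaxOver (fun D : vec R n => pnorm p D <= delta)
           (fun D => Reg pi (vadd rhat D))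
           (maxI (fun i => rhat i - dot pi rhat + delta * bcoef p i pi))),
      ((forall i : 'I_n, exists f : R -> R,
           forall pi : vec R n, simplex pi -> bcoef p i pi = f (pi i))
        <-> (p = 1%E \/ p = +oo%E)),
      (forall (pi : vec R n) (i : 'I_n), simplex pi ->
           bcoef 1%E i pi = 1 - pi i /\ bcoef +oo%E i pi = 2 * (1 - pi i))
    & (forall pi : vec R n, simplex pi ->
         IsMaxOver (fun D : vec R n => pnorm +oo%E D <= delta)
           (fun D => Reg pi (vadd rhat D))
           (2 * delta + maxI (fun i => rhat i - 2 * delta * pi i) - dot pi rhat))].
Proof.
have n_gt0 : (0 < n)%N by apply: leq_trans hn.
split.
- by move=> pi spi; apply: robust_regret.
- split=> [local|[->|->] i]; last 2 first.
  + by exists (fun t => 1 - t) => pi spi; rewrite bcoef1.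
  + by exists (fun t => 2 * (1 - t)) => pi spi; rewrite bcoefy.
  case: p hp local => [r r_ge1 local| _ _|//]; last by right.
  have [->|r_neq1] := eqVneq r 1; first by left.
  have r_gt1 : 1 < r by rewrite lt_def r_neq1 -lee_fin.
  pose i0 : 'I_n := Ordinal (leq_trans (isT : 1 <= 3)%N hn).
  pose i1 : 'I_n := Ordinal (leq_trans (isT : 2 <= 3)%N hn).
  pose i2 : 'I_n := Ordinal hn.
  by have := @bcoef_not_local R n r i0 i1 i2 r_gt1 isT isT isT (local i0).
- by move=> pi i spi; rewrite bcoef1 ?bcoefy.
- move=> pi spi.
  have -> : 2 * delta + maxI (fun i => rhat i - 2 * delta * pi i) - dot pi rhat =
            maxI (fun i => rhat i - dot pi rhat + delta * bcoef +oo%E i pi).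
    rewrite addrAC addrC -maxID //; congr maxI; apply: boolp.funext => i.
    by rewrite bcoefy //; lra.
  exact: (@robust_regret R n rhat delta +oo%E pi n_gt0 hdelta (leey _) spi).
Qed.
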